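(* Let $(I,\leq)$ be a finite poset containing two incomparable elements. Then the collection of nonzero functors in $\mathcal C=\{\mathrm{coker}(G\subseteq F)\mid G\subseteq F\subseteq K_I\}$ is not independent, and the functor $\mathcal Q\colon\Omega^{\mathrm{op}}\to\mathrm{Fun}(I,\mathrm{vect}_K)$ is not thin.
   Context: $K$ is a field, $\mathrm{vect}_K$ finite-dimensional $K$-vector spaces, $K_I$ the constant functor with value $K$; subfunctors of $K_I$ are identified with their supports $\mathrm{supp}(F)=\{v\mid F(v)\neq0\}$, which are upsets. $\mathrm{Sub}(I)$ is the set of subfunctors of $K_I$ ordered by $F\preccurlyeq G$ iff $\mathrm{supp}(F)\supseteq\mathrm{supp}(G)$. $\Omega:=\{(F,G)\in\mathrm{Sub}(I)^2\mid F\preccurlyeq G\}$ with the product order, and $\mathcal Q\colon\Omega^{\mathrm{op}}\to\mathrm{Fun}(I,\mathrm{vect}_K)$ sends $(F,G)$ to $\mathrm{coker}(G\subseteq F)$, and a relation $(F,G)\preccurlyeq(F',G')$ to the natural transformation $\mathrm{coker}(G'\subseteq F')\to\mathrm{coker}(G\subseteq F)$ induced by the inclusions $F'\subseteq F$, $G'\subseteq G$. A collection $\mathcal C'$ of objects is independent if for every finite direct sum $X$ of elements of $\mathcal C'$ there is a unique finitely supported $\beta\colon\mathcal C'\to\mathbb N$ with $X\cong\bigoplus_{A\in\mathcal C'}A^{\beta(A)}$. For a finite poset $J$ and $\mathcal P\colon J^{\mathrm{op}}\to\mathrm{Fun}(I,\mathrm{vect}_K)$: $K(a,-)\colon J\to\mathrm{vect}_K$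 is the free functor ($K$ at $b\succcurlyeq a$, else $0$); $\mathcal RM=\mathrm{Nat}_I(\mathcal P(-),M)$ with left adjoint $\mathcal L$ (so $\mathcal LK(a,-)\cong\mathcal P(a)$); $\eta_a\colon K(a,-)\to\mathcal R\mathcal LK(a,-)$ is the unit; $\mathcal P$ is thin if every $\eta_a$ is pointwise surjective. *)

From HB Require Import structures.
From mathcomp Require Import all_boot all_order all_algebra.
From Stdlib Require List.
Set Implicit Arguments. Unset Strict Implicit. Unset Printing Implicit Defensive.
Import Order.TTheory GRing.Theory.
Local Open Scope ring_scope.

(* Functors I -> vect_K for a finite poset I, encoded concretely:
   a dimension at each point and, for u <= v, a matrix acting on row
   vectors (x in V(u) is sent to x *m rmap u v in V(v)). *)
Section Reps.
Variables (K : fieldType) (d : Order.disp_t) (I : finPOrderType d).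

Record rep := Rep {
  rdim : I -> nat;
  rmap : forall u v : I, 'M[K]_(rdim u, rdim v)
}.

(* functoriality (maps between incomparable points are normalized to 0) *)
Definition is_rep (X : rep) : Prop :=
  (forall u, rmap X u u = 1%:M) /\
  (forall u v w, (u <= v)%O -> (v <= w)%O -> rmap X u v *m rmap X v w = rmap X u w) /\
  (forall u v, ~~ (u <= v)%O -> rmap X u v = 0).

Definition natT (M N : rep) := forall u : I, 'M[K]_(rdim M u, rdim N u).

Definition is_nat (M N : rep) (f : natT M N) : Prop :=
  forall u v, (u <= v)%O -> rmap M u v *m f v = f u *m rmap N u v.

Definition iso (M N : rep) : Prop :=
  exists (f : natT M N) (g : natT N M), is_nat f /\ is_nat g /\
    forall u, f u *m g u = 1%:M /\ g u *m f u = 1%:M.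

Definition nonzero_rep (X : rep) : Prop := exists v, rdim X v != 0%N.

Definition zrep : rep := @Rep (fun _ => 0%N) (fun _ _ => 0).

Definition dsum (M N : rep) : rep :=
  @Rep (fun u => (rdim M u + rdim N u)%N)
       (fun u v => block_mx (rmap M u v) 0 0 (rmap N u v)).

Definition sumseq (s : seq rep) : rep := foldr dsum zrep s.

(* X is isomorphic to the direct sum over A in C of A^(beta A), beta being
   finitely supported on C *)
Definition decomp (C : rep -> Prop) (X : rep) (beta : rep -> nat) : Prop :=
  (forall A, beta A <> 0%N -> C A) /\
  exists l : seq rep, List.NoDup l /\ (forall A, beta A <> 0%N -> List.In A l) /\
    iso X (sumseq (flatten (map (fun A => nseq (beta A) A) l))).

Definition independent (C : rep -> Prop) : Prop :=
  forall s : seq rep, (forall A, List.In A s -> C A) ->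
    exists beta, decomp C (sumseq s) beta /\
      forall beta', decomp C (sumseq s) beta' -> forall A, C A -> beta A = beta' A.

(* subfunctors of K_I, identified with their supports (upsets) *)
Definition upset (S : {set I}) : bool :=
  [forall x, forall y, (x \in S) && (x <= y)%O ==> (y \in S)].

(* coker(G <= F): K on supp F \ supp G, identity maps there, 0 elsewhere *)
Definition coker (F G : {set I}) : rep :=
  @Rep (fun v => nat_of_bool ((v \in F) && (v \notin G)))
       (fun u v => \matrix_(i, j) ((u <= v)%O)%:R).

Definition Ccoll (X : rep) : Prop :=
  nonzero_rep X /\
  exists F G : {set I}, upset F /\ upset G /\ G \subset F /\ X = coker F G.

(* Omega = {(F,G) in Sub(I)^2 | F <= G}, i.e. supp G \subset supp F *)
Definition Omega := {p : {set I} * {set I} | [&& upset p.1, upset p.2 & p.2 \subset p.1]}.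

(* product order, with F <= F' iff supp F' \subset supp F *)
Definition Omega_le : rel Omega :=
  fun a b => ((val b).1 \subset (val a).1) && ((val b).2 \subset (val a).2).

Definition Qobj (a : Omega) : rep := coker (val a).1 (val a).2.

(* Q(a <= b) : coker(b) -> coker(a), induced by the inclusions *)
Definition Qmor (a b : Omega) : natT (Qobj b) (Qobj a) := fun u => const_mx 1.

End Reps.

(* Thinness of P : J^op -> Fun(I, vect_K), unfolded: R L K(a,-) (b) =
   Nat(P b, P a) and eta_a at b sends 1 to P(a <= b) (when a <= b; the
   source is 0 otherwise).  Pointwise surjectivity of every eta_a thus says: *)
Definition thin (K : fieldType) (d : Order.disp_t) (I : finPOrderType d)
    (J : finType) (leJ : rel J) (Pobj : J -> rep K I)
    (Pmor : forall a b : J, natT (Pobj b) (Pobj a)) : Prop :=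
  forall (a b : J) (f : natT (Pobj b) (Pobj a)), is_nat f ->
    if leJ a b then exists c : K, forall u, f u = c *: Pmor a b u
    else forall u, f u = 0.

(* If x and y are incomparable, {x, y} is an antichain, and for an antichain S
   the functor coker(upclosure S :\: S <= upclosure S) is K on S, 0 elsewhere,
   with identity maps; it lies in C.  For disjoint S, T with S :|: T an
   antichain, the functor of S :|: T is the direct sum of those of S and T,
   so the functor of {x, y} has two different decompositions into members of C.
   Its endomorphism acting by 1 at x and by 0 at y is natural (no nonzero map
   joins two points of an antichain) but is not a multiple of the identity,
   so the unit of Q at the corresponding (F, G) is not surjective. *)
From HB Require Import structures.
From mathcomp Require Import all_boot all_order all_algebra.
From Stdlib Require List.
From Stdlib Require Import ClassicalEpsilon.
Set Implicit Arguments. Unset Strict Implicit. Unset Printing Implicit Defensive.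
Import Order.Theory GRing.Theory.
Local Open Scope ring_scope.

Section Decompositions.
Variables (K : fieldType) (d : Order.disp_t) (I : finPOrderType d).
Implicit Types (M N X : rep K I) (r : I -> I -> K).

Lemma iso_refl X : iso X X.
Proof.
exists (fun u => 1%:M), (fun u => 1%:M).
split; [|split] => [u v _|u v _|u]; by rewrite ?mulmx1 ?mul1mx.
Qed.

Definition has_entries X r := forall u v i j, rmap X u v i j = r u v.

Lemma has_entries_coker F G : has_entries (coker K F G) (fun u v => (u <= v)%O%:R).
Proof. by move=> u v i j; rewrite mxE. Qed.

Lemma has_entries_zrep r : has_entries (zrep K I) r.
Proof. by move=> u v []. Qed.

Lemma dim_neq0_of_ord n (i : 'I_n) : n != 0%N.
Proof. by case: n i => [[]|]. Qed.

Lemma has_entries_dsum M N r :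
  has_entries M r -> has_entries N r ->
  (forall u v, rdim M u != 0%N -> rdim N v != 0%N -> r u v = 0) ->
  (forall u v, rdim N u != 0%N -> rdim M v != 0%N -> r u v = 0) ->
  has_entries (dsum M N) r.
Proof.
move=> eM eN rMN rNM u v i j /=.
rewrite -(splitK i) -(splitK j).
case: (split i) => i'; case: (split j) => j' /=.
- by rewrite block_mxEul.
- by rewrite block_mxEur mxE (rMN _ _ (dim_neq0_of_ord i') (dim_neq0_of_ord j')).
- by rewrite block_mxEdl mxE (rNM _ _ (dim_neq0_of_ord i') (dim_neq0_of_ord j')).
- by rewrite block_mxEdr.
Qed.

Lemma rdim_dsum M N u : rdim (dsum M N) u = (rdim M u + rdim N u)%N.
Proof. by []. Qed.

Lemma rdim_zrep u : rdim (zrep K I) u = 0%N.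
Proof. by []. Qed.

Lemma sumseq_cons A (s : seq (rep K I)) : sumseq (A :: s) = dsum A (sumseq s).
Proof. by []. Qed.

Lemma sumseq_nil : sumseq [::] = zrep K I :> rep K I.
Proof. by []. Qed.

Lemma dim1_of_ord n (i : 'I_n) : (n <= 1)%N -> n = 1%N.
Proof. by case: n i => [[]|[]]. Qed.

Lemma ord_le1_eq n (i j : 'I_n) : (n <= 1)%N -> i = j.
Proof. by case: n i j => [[]//|[|//]] i j _; rewrite !ord1. Qed.

Definition const1_nat M N : natT M N := fun u => const_mx 1.

Lemma is_nat_const1 M N r :
  rdim M =1 rdim N -> (forall u, (rdim M u <= 1)%N) ->
  has_entries M r -> has_entries N r -> is_nat (const1_nat M N).
Proof.
move=> eq_dim dim_le1 eM eN u v _; apply/matrixP => i j; rewrite !mxE.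
under eq_bigr do rewrite eM mxE mulr1.
under [RHS]eq_bigr do rewrite eN mxE mul1r.
have dNv : rdim N v = 1%N by apply: (dim1_of_ord j); rewrite -eq_dim.
by rewrite !sumr_const !card_ord eq_dim dNv -eq_dim (dim1_of_ord i (dim_le1 u)).
Qed.

Lemma const1_nat_inv M N u :
  rdim M u = rdim N u -> (rdim M u <= 1)%N -> const1_nat M N u *m const1_nat N M u = 1%:M.
Proof.
move=> eq_dim dim_le1; apply/matrixP => i j; rewrite !mxE.
under eq_bigr do rewrite !mxE mul1r.
have dMu := dim1_of_ord i dim_le1.
rewrite (ord_le1_eq i j dim_le1).
by rewrite eqxx sumr_const card_ord -eq_dim dMu.
Qed.

Lemma iso_has_entries M N r :
  rdim M =1 rdim N -> (forall u, (rdim M u <= 1)%N) ->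
  has_entries M r -> has_entries N r -> iso M N.
Proof.
move=> eq_dim dim_le1 eM eN.
exists (const1_nat M N), (const1_nat N M); split; [|split].
- exact: is_nat_const1 eM eN.
- by apply: is_nat_const1 eN eM => // u; rewrite -eq_dim.
- by move=> u; rewrite !const1_nat_inv // -eq_dim.
Qed.

Lemma flatten_nseq1 (T : Type) (beta : T -> nat) (l : seq T) :
  (forall A, List.In A l -> beta A = 1%N) ->
  flatten [seq nseq (beta A) A | A <- l] = l.
Proof.
elim: l => //= A l IHl beta1.
by rewrite beta1 /= ?IHl // => [B lB|]; [apply: beta1; right | left].
Qed.

Definition list_indicator (l : seq (rep K I)) (A : rep K I) : nat :=
  if excluded_middle_informative (List.In A l) then 1 else 0.

Lemma list_indicator_in l A : List.In A l -> list_indicator l A = 1%N.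
Proof. by rewrite /list_indicator; case: excluded_middle_informative. Qed.

Lemma list_indicator_notin l A : ~ List.In A l -> list_indicator l A = 0%N.
Proof. by rewrite /list_indicator; case: excluded_middle_informative. Qed.

Lemma list_indicator_neq0 l A : list_indicator l A <> 0%N -> List.In A l.
Proof. by rewrite /list_indicator; case: excluded_middle_informative. Qed.

Lemma decomp_list_indicator (C : rep K I -> Prop) X l :
  List.NoDup l -> (forall A, List.In A l -> C A) -> iso X (sumseq l) ->
  decomp C X (list_indicator l).
Proof.
move=> uniq_l Cl isoX.
split=> [A /list_indicator_neq0|]; first exact: Cl.
exists l; split=> //; split=> [A|]; first exact: list_indicator_neq0.
by rewrite flatten_nseq1 // => A /list_indicator_in.
Qed.

Lemma not_independent_two_decomps (C : rep K I -> Prop) s l1 l2 A :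
  (forall B, List.In B s -> C B) ->
  List.NoDup l1 -> (forall B, List.In B l1 -> C B) -> iso (sumseq s) (sumseq l1) ->
  List.NoDup l2 -> (forall B, List.In B l2 -> C B) -> iso (sumseq s) (sumseq l2) ->
  List.In A l1 -> ~ List.In A l2 -> ~ independent C.
Proof.
move=> Cs uniq1 Cl1 iso1 uniq2 Cl2 iso2 l1A l2A indC.
have [beta [_ beta_uniq]] := indC s Cs.
have CA := Cl1 A l1A.
have := beta_uniq _ (decomp_list_indicator uniq1 Cl1 iso1) A CA.
by rewrite (beta_uniq _ (decomp_list_indicator uniq2 Cl2 iso2) A CA)
  (list_indicator_in l1A) (list_indicator_notin l2A).
Qed.

End Decompositions.

Section Antichains.
Variables (K : fieldType) (d : Order.disp_t) (I : finPOrderType d).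
Implicit Types (S T : {set I}).

Definition antichain S : Prop := {in S &, forall s t, (s <= t)%O -> s = t}.

Lemma antichainS S T : S \subset T -> antichain T -> antichain S.
Proof. by move=> /subsetP sST antiT s t /sST sT /sST tT; apply: antiT. Qed.

Lemma antichain_pair x y : (x >< y)%O -> antichain [set x; y].
Proof.
move=> xy s t; rewrite !inE => /orP[]/eqP-> /orP[]/eqP-> //.
  by rewrite incomparable_leF.
by rewrite incomparable_leF // comparable_sym.
Qed.

Lemma antichainU_leF S T u v :
  antichain (S :|: T) -> [disjoint S & T] -> u \in S -> v \in T -> (u <= v)%O = false.
Proof.
move=> anti dis uS vT; apply/negP => uv.
have eq_uv := anti u v (subsetP (subsetUl S T) u uS) (subsetP (subsetUr S T) v vT) uv.
by rewrite -eq_uv (disjointFr dis uS) in vT.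
Qed.

Definition upclosure S : {set I} := [set z | [exists s in S, (s <= z)%O]].

Lemma sub_upclosure S : S \subset upclosure S.
Proof. by apply/subsetP => s sS; rewrite inE; apply/exists_inP; exists s. Qed.

Lemma upsetP S : reflect (forall a b, a \in S -> (a <= b)%O -> b \in S) (upset S).
Proof.
apply: (iffP forallP) => [up a b aS ab|up a].
  by move/forallP/(_ b)/implyP: (up a); apply; rewrite aS ab.
by apply/forallP => b; apply/implyP => /andP[]; apply: up.
Qed.

Lemma upset_upclosure S : upset (upclosure S).
Proof.
apply/upsetP => a b; rewrite !inE => /exists_inP[s sS sa] ab.
by apply/exists_inP; exists s => //; apply: le_trans ab.
Qed.

Lemma upset_upclosureD S : antichain S -> upset (upclosure S :\: S).
Proof.
move=> anti; apply/upsetP => a b; rewrite !in_setD => /andP[aS aU] ab.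
rewrite (upsetP _ (upset_upclosure S) a b aU ab) andbT.
apply: contra aS => bS; move: aU; rewrite inE => /exists_inP[s sS sa].
have eq_sb : s = b by apply: anti => //; apply: le_trans ab.
by have -> : a = b by apply: le_anti; rewrite ab -eq_sb sa.
Qed.

Definition coker_up S : rep K I := coker K (upclosure S) (upclosure S :\: S).

Lemma rdim_coker_up S u : rdim (coker_up S) u = (u \in S).
Proof.
rewrite /= in_setD; case: (boolP (u \in S)) => uS; last by rewrite andbN.
by rewrite (subsetP (sub_upclosure S)).
Qed.

Lemma mem_of_ord_coker_up S u : 'I_(rdim (coker_up S) u) -> u \in S.
Proof. by move=> i; move: (dim_neq0_of_ord i); rewrite rdim_coker_up; case: (u \in S). Qed.

Lemma coker_up_inj : injective coker_up.
Proof.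
move=> S T eqST; apply/setP => u.
by move: (congr1 (fun X => rdim X u) eqST); rewrite !rdim_coker_up; do 2!case: (u \in _).
Qed.

Lemma Ccoll_coker_up S s : antichain S -> s \in S -> Ccoll (coker_up S).
Proof.
move=> anti sS; split; first by exists s; rewrite rdim_coker_up sS.
exists (upclosure S), (upclosure S :\: S).
by rewrite upset_upclosure upset_upclosureD ?subsetDl.
Qed.

Lemma iso_coker_upU S T :
  antichain (S :|: T) -> [disjoint S & T] ->
  iso (sumseq [:: coker_up (S :|: T)]) (sumseq [:: coker_up S; coker_up T]).
Proof.
move=> anti dis.
have anti' : antichain (T :|: S) by rewrite setUC.
have dis' : [disjoint T & S] by rewrite disjoint_sym.
pose r (u v : I) : K := (u <= v)%O%:R.
have entries U : has_entries (coker_up U) r by apply: has_entries_coker.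
have entries_zrep := has_entries_zrep r.
have entries0 U : has_entries (dsum (coker_up U) (zrep K I)) r.
  by apply: has_entries_dsum => // u v; rewrite rdim_zrep.
rewrite !sumseq_cons sumseq_nil; apply: (iso_has_entries (r := r)) => //.
- move=> u; rewrite !rdim_dsum rdim_zrep !rdim_coker_up !addn0 inE.
  by case: (boolP (u \in S)) => uS; rewrite ?(disjointFr dis uS).
- by move=> u; rewrite rdim_dsum rdim_zrep rdim_coker_up addn0 leq_b1.
apply: has_entries_dsum => // u v; rewrite rdim_dsum rdim_zrep !rdim_coker_up addn0.
  by rewrite -!lt0n !lt0b => uS vT; rewrite /r (antichainU_leF anti dis).
by rewrite -!lt0n !lt0b => uT vS; rewrite /r (antichainU_leF anti' dis').
Qed.

Lemma not_independent_coker_upU S T s t :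
  antichain (S :|: T) -> [disjoint S & T] -> s \in S -> t \in T ->
  ~ independent (@Ccoll K d I).
Proof.
move=> anti dis sS tT.
have antiS : antichain S by apply: antichainS anti; apply: subsetUl.
have antiT : antichain T by apply: antichainS anti; apply: subsetUr.
have sST : s \in S :|: T by rewrite inE sS.
have tST : t \in S :|: T by rewrite inE tT orbT.
have T_neq_S : T <> S by move=> eqTS; move: (disjointFr dis sS); rewrite eqTS sS.
have ST_neq_S : S :|: T <> S by move=> eqS; move: tST; rewrite eqS (disjointFl dis tT).
have ST_neq_T : S :|: T <> T by move=> eqT; move: sST; rewrite eqT (disjointFr dis sS).
have C_ST : Ccoll (coker_up (S :|: T)) := Ccoll_coker_up anti sST.
apply: (@not_independent_two_decomps _ _ _ _ [:: coker_up (S :|: T)]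
  [:: coker_up (S :|: T)] [:: coker_up S; coker_up T] (coker_up (S :|: T))).
- by move=> B [<-|[]].
- by repeat constructor.
- by move=> B [<-|[]].
- exact: iso_refl.
- constructor; last by repeat constructor.
  by case=> // /coker_up_inj.
- by move=> B [<-|[<-|[]]]; [apply: Ccoll_coker_up sS | apply: Ccoll_coker_up tT].
- exact: iso_coker_upU.
- by left.
- by case=> [/coker_up_inj/esym|[/coker_up_inj/esym|[]]].
Qed.

Lemma is_nat_scalar_coker_up S (c : I -> K) :
  antichain S -> is_nat ((fun u => (c u)%:M) : natT (coker_up S) (coker_up S)).
Proof.
move=> anti u v uv; rewrite mul_mx_scalar mul_scalar_mx; apply/matrixP => i j.
have uS := mem_of_ord_coker_up i; have vS := mem_of_ord_coker_up j.
by rewrite !mxE (anti u v uS vS uv).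
Qed.

Lemma coker_up_in_Omega S : antichain S ->
  [&& upset (upclosure S), upset (upclosure S :\: S) & upclosure S :\: S \subset upclosure S].
Proof. by move=> anti; rewrite upset_upclosure upset_upclosureD ?subsetDl. Qed.

Lemma not_thin_coker_up S x y : antichain S -> x \in S -> y \in S -> x != y ->
  ~ @thin K d I (Omega I) (@Omega_le d I) (@Qobj K d I) (@Qmor K d I).
Proof.
move=> anti xS yS xy thinQ.
pose a : Omega I := exist _ (upclosure S, upclosure S :\: S) (coker_up_in_Omega anti).
have := thinQ a a _ (is_nat_scalar_coker_up (fun u => (u == x)%:R) anti).
rewrite /Omega_le !subxx => -[c eq_c].
have entry u : u \in S -> (u == x)%:R = c.
  move=> uS; have i : 'I_(rdim (coker_up S) u) by rewrite rdim_coker_up uS; apply: ord0.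
  by move/matrixP/(_ i i): (eq_c u); rewrite !mxE eqxx mulr1.
move: (entry x xS) (entry y yS); rewrite eqxx eq_sym (negbTE xy) => <- /eqP.
by rewrite eq_sym oner_eq0.
Qed.

End Antichains.

Theorem proposition6p4 (K : fieldType) (d : Order.disp_t) (I : finPOrderType d) :
  (exists x y : I, ~~ (x >=< y)%O) ->
  ~ independent (@Ccoll K d I) /\ ~ @thin K d I (Omega I) (@Omega_le d I) (@Qobj K d I) (@Qmor K d I).
Proof.
move=> [x [y xy]].
have anti : antichain [set x; y] := antichain_pair xy.
have x_neq_y : x != y by rewrite incomparable_eqF.
split.
- apply: (@not_independent_coker_upU K d I [set x] [set y] x y) => //;
    by rewrite ?disjoints1 !inE.
- exact: not_thin_coker_up anti (set21 x y) (set22 x y) x_neq_y.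
Qed.
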